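(* Suppose $(a_1,a_2,a_3)\in\mathbb Z^3$ is one of the twelve triples $$(0,-2,1),\ (1,0,0),\ (-2,0,0),\ (0,1,-2),\ (1,-4,0),\ (0,2,1),\ (-4,1,2),\ (2,0,-4),\ (0,-5,1),\ (1,3,0),\ (-5,0,3),\ (3,1,-5),$$ or belongs to one of the four infinite families $(0,-2m-2,2m+1)$, $(2m+1,0,0)$, $(-2m-2,0,0)$, $(0,2m+1,-2m-2)$ with $m$ a nonnegative integer. Then the indefinite integral $$\int \frac{(1-k^2)^{a_1}(1+k-k^2)^{a_2}(1-4k-k^2)^{a_3}}{k^{a_1+a_2+a_3+1}}\,dk$$ is a rational function of $k$; that is, there is a rational function $g(k)$ whose derivative equals the integrand. *)

From HB Require Import structures.
From mathcomp Require Import all_boot all_order all_algebra.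
Set Implicit Arguments. Unset Strict Implicit. Unset Printing Implicit Defensive.
Import Order.TTheory GRing.Theory Num.Theory.
Local Open Scope ring_scope.

(* f^z for an integer exponent z, split as (numerator, denominator) *)
Definition pnum (R : nzRingType) (f : {poly R}) (z : int) : {poly R} :=
  if (0 <= z) then f ^+ `|z|%N else 1.
Definition pden (R : nzRingType) (f : {poly R}) (z : int) : {poly R} :=
  if (0 <= z) then 1 else f ^+ `|z|%N.

Definition f1 (R : nzRingType) : {poly R} := 1 - 'X^2.
Definition f2 (R : nzRingType) : {poly R} := 1 + 'X - 'X^2.
Definition f3 (R : nzRingType) : {poly R} := 1 - 4%:R *: 'X - 'X^2.

Definition integrand_num (R : nzRingType) (a1 a2 a3 : int) : {poly R} :=
  pnum (f1 R) a1 * pnum (f2 R) a2 * pnum (f3 R) a3 * pden 'X (a1 + a2 + a3 + 1).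
Definition integrand_den (R : nzRingType) (a1 a2 a3 : int) : {poly R} :=
  pden (f1 R) a1 * pden (f2 R) a2 * pden (f3 R) a3 * pnum 'X (a1 + a2 + a3 + 1).

(* The rational function N/D has a rational antiderivative g = p/q (q != 0):
   (p/q)' = (p' q - p q') / q^2 = N / D, cleared of denominators. *)
Definition has_rational_antiderivative (R : comNzRingType) (N D : {poly R}) : Prop :=
  exists p q : {poly R}, q != 0 /\ (p^`() * q - p * q^`()) * D = N * q ^+ 2.

Definition special_triple (a1 a2 a3 : int) : Prop :=
  (a1, a2, a3) \in
    ([:: (0, -2, 1); (1, 0, 0); (-2, 0, 0); (0, 1, -2); (1, -4, 0); (0, 2, 1);
        (-4, 1, 2); (2, 0, -4); (0, -5, 1); (1, 3, 0); (-5, 0, 3); (3, 1, -5)]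
       : seq (int * int * int))
  \/ exists m : nat,
       let m' := (m%:Z)%R in
       (a1, a2, a3) = (0, - (2 * m' + 2), 2 * m' + 1)
    \/ (a1, a2, a3) = (2 * m' + 1, 0, 0)
    \/ (a1, a2, a3) = (- (2 * m' + 2), 0, 0)
    \/ (a1, a2, a3) = (0, 2 * m' + 1, - (2 * m' + 2)).

From mathcomp Require Import all_boot all_order all_algebra.
From mathcomp Require Import ring zify.
Import GRing.Theory Num.Theory.
Local Open Scope ring_scope.

(** Put w := (1 + k^2) / v.  For v = k, 1 - k^2, 1 + k - k^2, 1 - 4k - k^2 the
    quantity a w^2 + b is, for suitable constants a, b, a constant multiple of
    ((1 - k^2) / k)^2, (k / (1 - k^2))^2, ((1 - 4k - k^2) / (1 + k - k^2))^2 and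
    ((1 + k - k^2) / (1 - 4k - k^2))^2 respectively, while w' is a constant
    multiple of the remaining factor of the integrand.  Hence each of the four
    infinite families is, up to a constant, (a w^2 + b)^m w', whose primitive
    is a polynomial in w.  The twelve sporadic triples are either the members
    m = 0 of the families or are settled by an explicit primitive. *)

Section QuadraticPowerPrimitive.
Variables (R : numFieldType) (a b : R) (U V T : {poly R}).
Hypothesis defT : T = a%:P * U ^+ 2 + b%:P * V ^+ 2.

(* quad_pow_primitive m / V^(2m+1) is P_m(U/V) for the polynomial P_m with
   P_m' = (a w^2 + b)^m; integration by parts gives the recursion
   (2m+3) P_(m+1)(w) = w (a w^2 + b)^(m+1) + 2(m+1) b P_m(w). *)
Fixpoint quad_pow_primitive (m : nat) : {poly R} :=
  if m is m'.+1 then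
    (m'.*2.+3)%:R^-1 *: (U * T ^+ m + (m.*2)%:R * b%:P * V ^+ 2 * quad_pow_primitive m')
  else U.

Lemma quad_pow_primitive_deriv m :
  (quad_pow_primitive m)^`() * V - (m.*2.+1)%:R * quad_pow_primitive m * V^`()
    = T ^+ m * (U^`() * V - U * V^`()).
Proof.
have dT : T^`() = a%:P * (2%:R * U * U^`()) + b%:P * (2%:R * V * V^`()).
  by rewrite defT !derivE; ring.
elim: m => [|m IH] /=; first by rewrite !mul1r.
set g := quad_pow_primitive m in IH *; set h := U * _ + _.
have dh : h^`() * V - (m.*2.+3)%:R * h * V^`()
          = (m.*2.+3)%:R * (T ^+ m.+1 * (U^`() * V - U * V^`())).
  rewrite /h -!polyC_natr !derivE deriv_exp succnK dT exprS.
  set Tm := T ^+ m; set g' := g^`(); rewrite [X in X * Tm]defT; apply/subr0_eq.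
  transitivity ((m.*2.+2)%:R%:P * b%:P * V ^+ 2 *
      (g' * V - (m.*2.+1)%:R * g * V^`() - Tm * (U^`() * V - U * V^`()))).
    rewrite polyC_natr -!muln2; clearbody g g' Tm h; ring.
  by rewrite IH subrr mulr0.
have c_inv : ((m.*2.+3)%:R^-1 : R)%:P * (m.*2.+3)%:R = 1.
  by rewrite -polyC_natr -polyCM mulVf // pnatr_eq0.
rewrite -mul_polyC derivM derivC mul0r add0r.
transitivity (((m.*2.+3)%:R^-1 : R)%:P * (h^`() * V - (m.*2.+3)%:R * h * V^`())).
  move: (h^`()) => h'; rewrite -!muln2; clearbody h; ring.
by rewrite dh mulrA c_inv mul1r.
Qed.

Lemma quad_pow_antiderivative (k : R) (N D : {poly R}) m :
  V != 0 -> k != 0 ->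
  k%:P * (N * V ^+ m.*2.+2) = T ^+ m * (U^`() * V - U * V^`()) * D ->
  has_rational_antiderivative N D.
Proof.
move=> V0 k0 defN.
exists (k^-1 *: quad_pow_primitive m), (V ^+ m.*2.+1); split; first exact: expf_neq0.
have k_inv : k^-1%:P * k%:P = 1 by rewrite -polyCM mulVf.
move: (quad_pow_primitive_deriv m) defN; set g := quad_pow_primitive m => dg defN.
rewrite -mul_polyC !derivE deriv_exp succnK !exprS in defN *.
set Vm := V ^+ m.*2 in defN *.
transitivity (k^-1%:P * Vm * ((g^`() * V - (m.*2.+1)%:R * g * V^`()) * D)).
  move: (g^`()) => g'; rewrite -!muln2; clearbody g Vm; ring.
rewrite dg -defN.
transitivity (k^-1%:P * k%:P * (N * (V * Vm) ^+ 2)); first by clearbody Vm; ring.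
by rewrite k_inv mul1r; ring.
Qed.

End QuadraticPowerPrimitive.

Section NonVanishing.
Variable R : nzRingType.

Lemma f1_neq0 : f1 R != 0.
Proof.
by apply/eqP => /(congr1 (coefp 0)); rewrite /f1 /= !coefE /= subr0 => /eqP; rewrite oner_eq0.
Qed.

Lemma f2_neq0 : f2 R != 0.
Proof.
by apply/eqP => /(congr1 (coefp 0)); rewrite /f2 /= !coefE /= !addr0 subr0 => /eqP; rewrite oner_eq0.
Qed.

Lemma f3_neq0 : f3 R != 0.
Proof.
by apply/eqP => /(congr1 (coefp 0)); rewrite /f3 /= !coefE /= mulr0 !subr0 => /eqP; rewrite oner_eq0.
Qed.

End NonVanishing.

Lemma expr_odd (R : nzRingType) (x : R) n : x ^+ n.*2.+1 = x * (x ^+ 2) ^+ n.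
Proof. by rewrite exprS -mul2n exprM. Qed.

Section Families.
Variables (R : numFieldType) (m : nat).

Lemma f1_over_X_family_antiderivative :
  has_rational_antiderivative (integrand_num R (Posz m.*2.+1) 0 0)
                              (integrand_den R (Posz m.*2.+1) 0 0).
Proof.
rewrite /integrand_num /integrand_den.
have -> : Posz m.*2.+1 + 0 + 0 + 1 = Posz m.*2.+2 by lia.
rewrite /pnum /pden /=.
apply: (@quad_pow_antiderivative R 1 (-4) (1 + 'X^2) 'X (f1 R ^+ 2) _ (-1) _ _ m).
- by rewrite /f1; ring.
- by rewrite polyX_eq0.
- by rewrite oppr_eq0 oner_eq0.
rewrite expr_odd; move: ('X ^+ m.*2.+2) ((_ ^+ 2) ^+ m) => Xm Tm.
by rewrite /f1 !derivE; ring.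
Qed.

Lemma X_over_f1_family_antiderivative :
  has_rational_antiderivative (integrand_num R (Negz m.*2.+1) 0 0)
                              (integrand_den R (Negz m.*2.+1) 0 0).
Proof.
rewrite /integrand_num /integrand_den.
have -> : Negz m.*2.+1 + 0 + 0 + 1 = Negz m.*2 by lia.
rewrite /pnum /pden /=.
apply: (@quad_pow_antiderivative R 1 (-1) (1 + 'X^2) (f1 R) (4%:P * 'X^2) _ (4 ^+ m.+1) _ _ m).
- by rewrite /f1; ring.
- exact: f1_neq0.
- by rewrite expf_neq0 // pnatr_eq0.
rewrite expr_odd [(4%:P * _) ^+ m]exprMn polyC_exp [_ ^+ m.+1]exprS.
move: (f1 R ^+ m.*2.+2) (('X ^+ 2) ^+ m) (4%:P ^+ m) => Fm Tm Cm.
by rewrite /f1 !derivE; ring.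
Qed.

Lemma f3_over_f2_family_antiderivative :
  has_rational_antiderivative (integrand_num R 0 (Negz m.*2.+1) (Posz m.*2.+1))
                              (integrand_den R 0 (Negz m.*2.+1) (Posz m.*2.+1)).
Proof.
rewrite /integrand_num /integrand_den.
have -> : 0 + Negz m.*2.+1 + Posz m.*2.+1 + 1 = 0 by lia.
rewrite /pnum /pden /=.
apply: (@quad_pow_antiderivative R 5 (-4) (1 + 'X^2) (f2 R) (f3 R ^+ 2) _ (-1) _ _ m).
- by rewrite /f2 /f3 -mul_polyC; ring.
- exact: f2_neq0.
- by rewrite oppr_eq0 oner_eq0.
rewrite expr_odd; move: (f2 R ^+ m.*2.+2) ((_ ^+ 2) ^+ m) => Fm Tm.
by rewrite /f2 /f3 -!mul_polyC !derivE; ring.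
Qed.

Lemma f2_over_f3_family_antiderivative :
  has_rational_antiderivative (integrand_num R 0 (Posz m.*2.+1) (Negz m.*2.+1))
                              (integrand_den R 0 (Posz m.*2.+1) (Negz m.*2.+1)).
Proof.
rewrite /integrand_num /integrand_den.
have -> : 0 + Posz m.*2.+1 + Negz m.*2.+1 + 1 = 0 by lia.
rewrite /pnum /pden /=.
apply: (@quad_pow_antiderivative R 5 (-1) (1 + 'X^2) (f3 R) (4%:P * f2 R ^+ 2) _ (4 ^+ m.+1) _ _ m).
- by rewrite /f2 /f3 -mul_polyC; ring.
- exact: f3_neq0.
- by rewrite expf_neq0 // pnatr_eq0.
rewrite expr_odd [(4%:P * _) ^+ m]exprMn polyC_exp [_ ^+ m.+1]exprS.
move: (f3 R ^+ m.*2.+2) ((f2 R ^+ 2) ^+ m) (4%:P ^+ m) => Fm Tm Cm.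
by rewrite /f2 /f3 -!mul_polyC !derivE; ring.
Qed.

End Families.

Definition sporadic_triples : seq (int * int * int) :=
  [:: (0, -2, 1); (1, 0, 0); (-2, 0, 0); (0, 1, -2); (1, -4, 0); (0, 2, 1);
      (-4, 1, 2); (2, 0, -4); (0, -5, 1); (1, 3, 0); (-5, 0, 3); (3, 1, -5)].

Ltac antiderivative_certificate p q :=
  rewrite /has_rational_antiderivative /integrand_num /integrand_den /pnum /pden /=;
  exists p, q; split;
  [ by rewrite !mulf_neq0 ?expf_neq0 ?polyC_eq0 ?pnatr_eq0 ?polyX_eq0 ?f1_neq0 ?f2_neq0 ?f3_neq0
  | by rewrite /f1 /f2 /f3 -?mul_polyC !(derivE, deriv_exp, derivXn); ring ].

Lemma sporadic_antiderivative (R : numFieldType) (a1 a2 a3 : int) :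
  (a1, a2, a3) \in sporadic_triples ->
  has_rational_antiderivative (integrand_num R a1 a2 a3) (integrand_den R a1 a2 a3).
Proof.
rewrite /sporadic_triples !inE; repeat case/orP; move/eqP => [-> -> ->].
- exact: (f3_over_f2_family_antiderivative R 0).
- exact: (f1_over_X_family_antiderivative R 0).
- exact: (X_over_f1_family_antiderivative R 0).
- exact: (f2_over_f3_family_antiderivative R 0).
- antiderivative_certificate (2 + 6 * 'X - 5 * 'X^3 : {poly R}) (15%:P * f2 R ^+ 3).
- antiderivative_certificate (-1 + 3 * 'X + 30 * 'X^2 + 30 * 'X^4 - 3 * 'X^5 - 'X^6 : {poly R})
    (3%:P * 'X ^+ 3 : {poly R}).
- antiderivative_certificate (-29 + 6 * 'X + 66 * 'X^2 - 21 * 'X^4 - 6 * 'X^5 : {poly R})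
    (6%:P * f1 R ^+ 3).
- antiderivative_certificate (-1 + 12 * 'X - 30 * 'X^2 + 20 * 'X^3 + 15 * 'X^4 : {poly R})
    (30%:P * f3 R ^+ 3).
- antiderivative_certificate (2 + 8 * 'X + 4 * 'X^2 - 16 * 'X^3 - 5 * 'X^4 : {poly R})
    (20%:P * f2 R ^+ 4).
- antiderivative_certificate
    (-1 - 4 * 'X + 2 * 'X^2 + 32 * 'X^3 + 32 * 'X^5 - 2 * 'X^6 - 4 * 'X^7 + 'X^8 : {poly R})
    (4%:P * 'X ^+ 4 : {poly R}).
- antiderivative_certificate
    (-7 + 29 * 'X^2 - 8 * 'X^3 - 21 * 'X^4 - 8 * 'X^5 - 'X^6 : {poly R}) (2%:P * f1 R ^+ 4).
- antiderivative_certificate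
    (1 - 6 * 'X + 37 * 'X^2 - 98 * 'X^3 + 35 * 'X^4 + 110 * 'X^5 + 55 * 'X^6 + 10 * 'X^7
      : {poly R})
    (10%:P * f3 R ^+ 4).
Qed.

Theorem theorem5 (R : numFieldType) (a1 a2 a3 : int) :
  special_triple a1 a2 a3 ->
  has_rational_antiderivative (integrand_num R a1 a2 a3) (integrand_den R a1 a2 a3).
Proof.
case=> [/sporadic_antiderivative // | [m /=]].
have -> : 2 * m%:Z + 1 = Posz m.*2.+1 by lia.
have -> : - (2 * m%:Z + 2) = Negz m.*2.+1 by lia.
case=> [|[|[]]] [-> -> ->].
- exact: f3_over_f2_family_antiderivative.
- exact: f1_over_X_family_antiderivative.
- exact: X_over_f1_family_antiderivative.
- exact: f2_over_f3_family_antiderivative.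
Qed.
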